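(* Let $r\ge6$ be a composite integer, written as $r=2^ep_z^{e_z}\cdots p_1^{e_1}$ with $e\ge0$, $z\ge0$, $p_1>\dots>p_z$ distinct odd primes and $e_j\ge1$. Let $q$ be a prime power, with $q\ge3$ if $r$ is even, and let $k\ge1$. Put $\ell_j=(p_j-3)/2$, $\Pi_j=\prod_{h=1}^jp_h^{e_h}$ ($\Pi_0=1$), and $$N_r(k,q)=\prod_{j=1}^{z}\prod_{i=1}^{e_j}\frac{q^{p_j^{i-1}\Pi_{j-1}k}\big(q^{(\ell_j+1)p_j^{i-1}\Pi_{j-1}k}-1\big)\big(q^{p_j^{i}\Pi_{j-1}k}-1\big)}{q^{p_j^{i-1}\Pi_{j-1}k}-1}\cdot\prod_{i=1}^{e}\left(\left\lfloor\frac{q-1}{2}\right\rfloor\frac{q^{2^i\Pi_zk}-1}{q-1}\right)$$ (empty products equal $1$), and $$S_3(rk,k,q)=q^k\,\frac{q^{(\ell+1)k}-1}{q^k-1}\,(q^{rk}-1),\qquad \ell=\left\lceil r/2\right\rceil-2.$$ Then $S_3(rk,k,q)/N_r(k,q)\to0$ as $k\to\infty$ with $q$ fixed, and also as $q\to\infty$ (over admissible prime powers) with $k$ fixed. If moreover $r$ is odd, write $r=2h+1$ and put $$S_4(rk,k,q)=h\left((q^k-1)^h(q^{rk}-1)+\frac{(q^k-1)^{h-1}(q^{rk}-1)}{q-1}\right),\qquad S_5(rk,k,q)=hq^k(q^k-1)^{h-1}(q^{rk}-1)+\frac{q^{rk}-1}{q^k-1};$$ then $S_4(rk,k,q)/N_r(k,q)\to0$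 and $S_5(rk,k,q)/N_r(k,q)\to0$ both as $k\to\infty$ with $q$ fixed and as $q\to\infty$ with $k$ fixed.
   Context: $N_r(k,q)$ is the cardinality of the paper's cyclic subspace codes in the Grassmannian of $k$-dimensional $\mathbb{F}_q$-subspaces of $\mathbb{F}_{q^{rk}}$ with minimum distance $2k-2$, and $S_3,S_4,S_5$ are the sizes of previously known codes with the same parameters; the statement is purely a comparison of these explicit functions. *)

From HB Require Import structures.
From mathcomp Require Import all_boot all_order all_algebra.
From mathcomp Require Import all_classical all_reals all_analysis.
Set Implicit Arguments. Unset Strict Implicit. Unset Printing Implicit Defensive.
Import Order.TTheory GRing.Theory Num.Theory.
Local Open Scope ring_scope.

(* odd prime divisors of r, listed in decreasing order: p_1 > ... > p_z *)
Definition oddps (r : nat) : seq nat := rev [seq p <- primes r | odd p].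

Definition Pi (r j : nat) : nat := (\prod_(p <- take j (oddps r)) p ^ logn p r)%N.

Definition prime_power (q : nat) : Prop :=
  exists p n : nat, prime p /\ (0 < n)%N /\ q = (p ^ n)%N.

Definition admissible (r q : nat) : Prop := prime_power q /\ (odd r \/ (3 <= q)%N).

Section Sizes.
Variable R : realType.

Definition qp (q n : nat) : R := (q%:R : R) ^+ n.

(* factor for the odd prime p = p_{j}, 1-indexed exponent i, Pj = Pi_{j-1} *)
Definition Nfac (p i Pj k q : nat) : R :=
  let a := (p ^ i.-1 * Pj * k)%N in
  let l := ((p - 3) %/ 2)%N in
  qp q a * (qp q ((l + 1) * a) - 1) * (qp q (p ^ i * Pj * k) - 1) / (qp q a - 1).

Definition Nr (r k q : nat) : R :=
  let ps := oddps r in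
  (\prod_(j < size ps)
      \prod_(1 <= i < (logn (nth 0 ps j) r).+1) Nfac (nth 0 ps j) i (Pi r j) k q)
  * \prod_(1 <= i < (logn 2 r).+1)
      (((q - 1) %/ 2)%N%:R * (qp q (2 ^ i * Pi r (size ps) * k) - 1) / (q%:R - 1)).

Definition S3 (r k q : nat) : R :=
  let l := (uphalf r - 2)%N in
  qp q k * (qp q ((l + 1) * k) - 1) / (qp q k - 1) * (qp q (r * k) - 1).

Definition S4 (r k q : nat) : R :=
  let h := r./2 in
  h%:R * ((qp q k - 1) ^+ h * (qp q (r * k) - 1)
          + (qp q k - 1) ^+ h.-1 * (qp q (r * k) - 1) / (q%:R - 1)).

Definition S5 (r k q : nat) : R :=
  let h := r./2 in
  h%:R * qp q k * (qp q k - 1) ^+ h.-1 * (qp q (r * k) - 1)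
  + (qp q (r * k) - 1) / (qp q k - 1).

End Sizes.

From HB Require Import structures.
From mathcomp Require Import all_boot all_order all_algebra.
From mathcomp Require Import all_classical all_reals all_analysis.
From mathcomp Require Import zify ring lra.
Import Order.TTheory GRing.Theory Num.Theory numFieldTopology.Exports numFieldNormedType.Exports.

(* Each factor of N_r(k,q) is, up to a bounded constant, a power of q, so
   N_r(k,q) >= q^(k D_r) / c_r with D_r the sum of the exponents.  For the
   prime p_j the exponents (3p_j-1)/2 p_j^(i-1) Pi_(j-1) sum to at least
   3/2 (Pi_j - Pi_(j-1)) + e_j, which telescopes, and the 2-part contributes
   2r - 2 Pi_z; since r is composite this yields D_r >= r + ceil(r/2).  As
   S_3, S_4 and S_5 are O(q^(k (r + ceil(r/2) - 1))), every ratio is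
   O(q^(-k)), which tends to 0 both as k -> oo and as q -> oo. *)

Set Implicit Arguments.
Unset Strict Implicit.
Unset Printing Implicit Defensive.

Local Open Scope classical_set_scope.

(* Indices are 0-based: pj r j and ej r j are the paper's p_(j+1) and e_(j+1),
   whose factors in N_r involve Pi r j = Pi_j. *)
Definition pj r j := nth 0 (oddps r) j.
Definition ej r j := logn (pj r j) r.

Definition Nfac_deg (p i P : nat) : nat := (1 + (p - 3) %/ 2 + p) * p ^ i.-1 * P.

Definition Ndeg r : nat :=
  \sum_(j < size (oddps r)) \sum_(1 <= i < (ej r j).+1) Nfac_deg (pj r j) i (Pi r j)
  + \sum_(1 <= i < (logn 2 r).+1) 2 ^ i * Pi r (size (oddps r)).

Lemma mem_oddps r p : p \in oddps r -> [/\ prime p, odd p & p \in primes r].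
Proof.
rewrite /oddps mem_rev mem_filter => /andP[odd_p p_r].
by split=> //; move: p_r; rewrite mem_primes => /andP[].
Qed.

Lemma pj_spec r j : j < size (oddps r) -> [/\ prime (pj r j), odd (pj r j) & 0 < ej r j].
Proof.
move=> lt_j; have /mem_oddps[pr_p odd_p p_r] := mem_nth 0 lt_j.
by rewrite /ej /pj logn_gt0 p_r.
Qed.

Lemma Pi0 r : Pi r 0 = 1.
Proof. by rewrite /Pi take0 big_nil. Qed.

Lemma PiS r j : j < size (oddps r) -> Pi r j.+1 = Pi r j * pj r j ^ ej r j.
Proof. by move=> lt_j; rewrite /Pi (take_nth 0) // -cats1 big_cat big_seq1. Qed.

Lemma Pi_gt0 r j : 0 < Pi r j.
Proof. by apply: prodn_gt0 => -[|p]; rewrite expn_gt0 // lognE. Qed.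

Lemma two_odd_decomp r : 0 < r -> r = 2 ^ logn 2 r * Pi r (size (oddps r)).
Proof.
move=> r_gt0.
have -> : Pi r (size (oddps r)) = \prod_(p <- primes r | odd p) p ^ logn p r.
  by rewrite /Pi take_size /oddps big_rev big_filter.
rewrite {1}(prod_prime_decomp r_gt0) prime_decompE big_map (bigID odd) /= mulnC.
congr (_ * _); rewrite -big_filter.
have -> : [seq p <- primes r | ~~ odd p] = [seq p <- primes r | p == 2].
  apply: eq_in_filter => p; rewrite mem_primes => /and3P[pr_p _ _].
  by apply/idP/eqP => [/(prime_oddPn pr_p)|->].
have [r_2|/negbTE r_2] := boolP (2 \in primes r).
  by rewrite (filter_pred1_uniq (primes_uniq r) r_2) big_seq1.
have -> : [seq p <- primes r | p == 2] = [::].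
  by apply/eqP; rewrite -size_eq0 size_filter; apply/eqP/count_memPn; rewrite r_2.
rewrite big_nil; suff -> : logn 2 r = 0 by [].
by apply/eqP; rewrite -leqn0 leqNgt logn_gt0 r_2.
Qed.

Lemma uphalf_add_self r : uphalf r + uphalf r = r + odd r.
Proof. by rewrite uphalf_half; have := odd_double_half r; rewrite -addnn; lia. Qed.

Lemma uphalf_odd r : odd r -> uphalf r = (r./2).+1.
Proof. by move=> odd_r; rewrite uphalf_half odd_r. Qed.

Lemma Nfac_deg_sum_ge p e P : odd p -> 2 < p -> 0 < P ->
  3 * (p ^ e * P) + 2 * e <= 2 * \sum_(1 <= i < e.+1) Nfac_deg p i P + 3 * P.
Proof.
move=> odd_p p_gt2 P_gt0.
have coef : 2 * (1 + (p - 3) %/ 2 + p) = 3 * p - 1.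
  by have := odd_double_half p; rewrite odd_p -addnn; lia.
elim: e => [|e IHe]; first by rewrite big_geq // expn0 mul1n; lia.
rewrite big_nat_recr //= {2}/Nfac_deg /= expnS -!mulnA.
have : 0 < p ^ e * P by rewrite muln_gt0 expn_gt0; lia.
move: IHe coef; set c := 1 + _ + p; set X := p ^ e * P; set S := \sum_(_ <= _ < _) _.
move=> IHe coef X_gt0.
have cX : 2 * (c * X) = 3 * (p * X) - X by rewrite mulnA coef mulnBl mul1n mulnA.
lia.
Qed.

Lemma Pi_telescope r n : n <= size (oddps r) ->
  3 * Pi r n + 2 * \sum_(j < n) ej r j <=
  2 * \sum_(j < n) \sum_(1 <= i < (ej r j).+1) Nfac_deg (pj r j) i (Pi r j) + 3.
Proof.
elim: n => [|n IHn] lt_n; first by rewrite Pi0 !big_ord0.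
have [pr_p odd_p _] := pj_spec lt_n.
have := Nfac_deg_sum_ge (ej r n) odd_p (odd_prime_gt2 odd_p pr_p) (Pi_gt0 r n).
have := IHn (ltnW lt_n).
rewrite !big_ord_recr /= (PiS lt_n) [Pi r n * _]mulnC.
lia.
Qed.

Lemma sum_pow2_mul e o : \sum_(1 <= i < e.+1) 2 ^ i * o + 2 * o = 2 ^ e.+1 * o.
Proof.
elim: e => [|e IHe]; first by rewrite big_geq.
by rewrite big_nat_recr //= [2 ^ e.+2]expnS -mulnA; lia.
Qed.

Lemma logn2_odd r : odd r -> logn 2 r = 0.
Proof. by move=> odd_r; rewrite lognE /= dvdn2 odd_r andbF. Qed.

Lemma odd_composite_ej_sum_ge2 r : odd r -> 1 < r -> ~~ prime r ->
  2 <= \sum_(j < size (oddps r)) ej r j.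
Proof.
move=> odd_r r_gt1 r_npr.
have r_Pi := two_odd_decomp (ltnW r_gt1).
rewrite logn2_odd // mul1n in r_Pi.
have size_le : size (oddps r) <= \sum_(j < size (oddps r)) ej r j.
  rewrite -[leqLHS]card_ord -sum1_card; apply: leq_sum => j _.
  by have [] := pj_spec (ltn_ord j).
move: r_Pi size_le; case E: (size (oddps r)) => [|[|z]]; [by rewrite Pi0; lia | | lia].
have lt_0 : 0 < size (oddps r) by rewrite E.
have [pr_p _ ej_gt0] := pj_spec lt_0.
rewrite (PiS lt_0) Pi0 mul1n big_ord1 => r_pow _.
case: (ej r 0) ej_gt0 r_pow => [|[|e]] // _ r_p.
by rewrite r_p expn1 pr_p in r_npr.
Qed.

Lemma Ndeg_ge r : 5 < r -> ~~ prime r -> r + uphalf r <= Ndeg r.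
Proof.
move=> r_gt5 r_npr; have r_gt0 : 0 < r by lia.
have r_eq := two_odd_decomp r_gt0.
have tel := Pi_telescope (leqnn (size (oddps r))).
have two_sum := sum_pow2_mul (logn 2 r) (Pi r (size (oddps r))).
rewrite expnS -mulnA -r_eq in two_sum.
have u2 := uphalf_add_self r.
rewrite /Ndeg; have [odd_r|even_r] := boolP (odd r).
  have := odd_composite_ej_sum_ge2 odd_r (leq_trans (isT : 1 < 6) r_gt5) r_npr.
  rewrite logn2_odd // expn0 mul1n in r_eq.
  lia.
have : 2 * Pi r (size (oddps r)) <= r.
  rewrite [leqRHS]r_eq leq_mul2r; apply/orP; right.
  by rewrite -{1}(expn1 2) leq_pexp2l // logn_gt0 mem_primes r_gt0 dvdn2 even_r.
lia.
Qed.

Lemma admissible_ge2 r q : admissible r q -> 2 <= q.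
Proof.
case=> -[p [n [pr_p [n_gt0 ->]]]] _.
by apply: leq_trans (prime_gt1 pr_p) _; rewrite -{1}(expn1 p) leq_pexp2l // prime_gt0.
Qed.

Lemma admissible_ge3 r q : admissible r q -> 0 < logn 2 r -> 3 <= q.
Proof. by move=> [_ [odd_r|//]]; rewrite logn_gt0 mem_primes dvdn2 odd_r andbF. Qed.

Local Open Scope ring_scope.

Section PowerBounds.
Variable R : realFieldType.
Implicit Types (x X : R).

Lemma prod_ge_pow_sum (I : eqType) (s : seq I) (F c : I -> R) (d : I -> nat) x :
  0 <= x -> (forall i, 0 < c i) -> (forall i, i \in s -> x ^+ d i / c i <= F i) ->
  x ^+ (\sum_(i <- s) d i)%N / \prod_(i <- s) c i <= \prod_(i <- s) F i.
Proof.
move=> x_ge0 c_gt0; elim: s => [|i s IHs] F_ge; first by rewrite !big_nil invr1 mulr1.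
rewrite !big_cons exprD invfM mulrACA; apply: ler_pM.
- by apply: divr_ge0; [exact: exprn_ge0 | exact: ltW].
- by apply: divr_ge0; [exact: exprn_ge0 | exact/ltW/prodr_gt0].
- by rewrite F_ge ?mem_head.
- by apply: IHs => j s_j; rewrite F_ge // in_cons s_j orbT.
Qed.

Lemma geom_quot_ge X n : 1 < X -> X ^+ n <= (X ^+ n.+1 - 1) / (X - 1).
Proof.
move=> X_gt1; rewrite ler_pdivlMr ?subr_gt0 // mulrBr mulr1 -exprSr lerD2l lerN2.
exact: exprn_ege1 (ltW X_gt1).
Qed.

Lemma geom_quot_le X n : 2 <= X -> (X ^+ n.+1 - 1) / (X - 1) <= 2 * X ^+ n.
Proof.
move=> X_ge2; rewrite ler_pdivrMr; last lra.
have : 1 <= X ^+ n by apply: exprn_ege1; lra.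
rewrite exprSr; nra.
Qed.

Lemma Nfac_shape_ge X l p : 2 <= X -> (0 < p)%N ->
  X ^+ (1 + l + p) / 2 <= X * (X ^+ (l + 1) - 1) * (X ^+ p - 1) / (X - 1).
Proof.
move=> X_ge2 p_gt0.
have Xp_ge2 : 2 <= X ^+ p by apply: le_trans (ler_eXnr _ _) => //; lra.
have -> : X * (X ^+ (l + 1) - 1) * (X ^+ p - 1) / (X - 1)
          = X * ((X ^+ l.+1 - 1) / (X - 1)) * (X ^+ p - 1) by rewrite addn1 mulrAC -!mulrA.
have -> : X ^+ (1 + l + p) / 2 = X * X ^+ l * (X ^+ p / 2) by rewrite !exprD expr1 !mulrA.
have Xl_ge0 : 0 <= X ^+ l by apply: exprn_ge0; lra.
apply: ler_pM; [by apply: mulr_ge0; lra | lra | | lra].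
by rewrite ler_wpM2l ?geom_quot_ge //; lra.
Qed.

Lemma half_floor_geom_ge q m : (3 <= q)%N -> (0 < m)%N ->
  q%:R ^+ m / 6 <= ((q - 1) %/ 2)%N%:R * (q%:R ^+ m - 1) / (q%:R - 1) :> R.
Proof.
move=> q_ge3 m_gt0.
have : ((q - 1) <= 3 * ((q - 1) %/ 2))%N.
  by have := divn_eq (q - 1) 2; have := ltn_pmod (q - 1) (isT : (0 < 2)%N); lia.
rewrite -(ler_nat R) natrM natrB; last lia.
set t := ((q - 1) %/ 2)%N%:R; set x := q%:R; move=> x_le.
have x_ge3 : 3 <= x by rewrite ler_nat.
have : 3 <= x ^+ m by apply: le_trans (ler_eXnr _ _) => //; lra.
set Y := x ^+ m => Y_ge3.
rewrite ler_pdivlMr; last lra.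
have : 0 <= (3 * t - (x - 1)) * Y by apply: mulr_ge0; lra.
have : 0 <= t * (Y - 2) by apply: mulr_ge0; [exact: ler0n | lra].
nra.
Qed.

End PowerBounds.

Section NrBounds.
Variable R : realType.

Lemma qp_ge2 q n : (2 <= q)%N -> (0 < n)%N -> 2 <= qp R q n.
Proof.
move=> q_ge2 n_gt0; have : 2 <= q%:R :> R by rewrite ler_nat.
by move=> x_ge2; apply: le_trans (ler_eXnr _ _) => //; lra.
Qed.

Lemma Nfac_ge p i P k q : (0 < p)%N -> (0 < i)%N -> (0 < P)%N -> (0 < k)%N -> (2 <= q)%N ->
  qp R q (Nfac_deg p i P * k) / 2 <= Nfac R p i P k q.
Proof.
move=> p_gt0 i_gt0 P_gt0 k_gt0 q_ge2; rewrite /Nfac /Nfac_deg.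
set l := ((p - 3) %/ 2)%N; set a := (p ^ i.-1 * P * k)%N.
have a_gt0 : (0 < a)%N by rewrite !muln_gt0 expn_gt0; lia.
have -> : ((1 + l + p) * p ^ i.-1 * P * k = a * (1 + l + p))%N by rewrite /a; ring.
have -> : ((l + 1) * a = a * (l + 1))%N by rewrite mulnC.
have -> : (p ^ i * P * k = a * p)%N by rewrite /a -{1}(prednK i_gt0) expnS; ring.
clearbody a; rewrite /qp !exprM; apply: Nfac_shape_ge => //.
exact: (qp_ge2 q_ge2 a_gt0).
Qed.

Definition Nr_const r : R :=
  (\prod_(j < size (oddps r)) \prod_(1 <= i < (ej r j).+1) 2)
  * \prod_(1 <= i < (logn 2 r).+1) 6.

Lemma Nr_const_gt0 r : 0 < Nr_const r.
Proof. by rewrite mulr_gt0 // !prodr_gt0 // => j _; rewrite prodr_gt0. Qed.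

Lemma Nr_ge r k q : admissible r q -> (0 < k)%N ->
  qp R q (Ndeg r * k) / Nr_const r <= Nr R r k q.
Proof.
move=> adm_q k_gt0; have q_ge2 := admissible_ge2 adm_q.
rewrite /Nr /Ndeg /Nr_const mulnDl !big_distrl /= /qp exprD invfM mulrACA.
apply: ler_pM.
- by apply: divr_ge0; [exact: exprn_ge0 | apply/ltW/prodr_gt0 => j _; exact: prodr_gt0].
- by apply: divr_ge0; [exact: exprn_ge0 | exact/ltW/prodr_gt0].
- apply: prod_ge_pow_sum => // [j|j _]; first exact: prodr_gt0.
  rewrite big_distrl; apply: prod_ge_pow_sum => // i.
  rewrite mem_index_iota => /andP[i_gt0 _].
  have [pr_p _ _] := pj_spec (ltn_ord j).
  by apply: Nfac_ge => //; [exact: prime_gt0 | exact: Pi_gt0].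
- apply: prod_ge_pow_sum => // i; rewrite mem_index_iota => /andP[i_gt0 i_le].
  apply: half_floor_geom_ge; first by apply: admissible_ge3 adm_q _; lia.
  by rewrite !muln_gt0 expn_gt0 Pi_gt0.
Qed.

End NrBounds.

Section SizeBounds.
Variable R : realType.

Lemma S3_le r k q : (2 < r)%N -> (2 <= q)%N -> (0 < k)%N ->
  0 <= S3 R r k q <= 2 * qp R q ((r + uphalf r).-1 * k).
Proof.
move=> r_gt2 q_ge2 k_gt0; rewrite /S3 /qp.
have u_ge2 : (2 <= uphalf r)%N by have := uphalf_add_self r; lia.
have -> : ((r + uphalf r).-1 * k = k * (1 + (uphalf r - 2) + r))%N.
  by rewrite mulnC; congr (_ * _); lia.
rewrite [((_ + 1) * k)%N]mulnC [(r * k)%N]mulnC !exprM addn1.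
set X := q%:R ^+ k; set l := (uphalf r - 2)%N.
have X_ge2 : 2 <= X := qp_ge2 R q_ge2 k_gt0.
have G_ge : X ^+ l <= (X ^+ l.+1 - 1) / (X - 1) by apply: geom_quot_ge; lra.
have G_le := geom_quot_le l X_ge2.
have Xl_ge0 : 0 <= X ^+ l by apply: exprn_ge0; lra.
have Xr_ge1 : 1 <= X ^+ r by apply: exprn_ege1; lra.
rewrite -[X * _ / _]mulrA; set G := (_ / (X - 1)) in G_ge G_le *.
rewrite !exprD expr1.
apply/andP; split; first by apply: mulr_ge0; [apply: mulr_ge0|]; lra.
have -> : 2 * (X * X ^+ l * X ^+ r) = X * (2 * X ^+ l) * X ^+ r by ring.
apply: ler_pM; [by apply: mulr_ge0; lra | lra | | lra].
by apply: ler_wpM2l; lra.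
Qed.

Lemma S4_le r k q : odd r -> (2 <= q)%N -> (0 < k)%N ->
  0 <= S4 R r k q <= 2 * (r./2)%:R * qp R q ((r + uphalf r).-1 * k).
Proof.
move=> odd_r q_ge2 k_gt0; rewrite /S4 /qp uphalf_odd // addnS /=.
set h := r./2; rewrite [((r + h) * k)%N]mulnC [(r * k)%N]mulnC addnC !exprM exprD.
set X := q%:R ^+ k; have X_ge2 : 2 <= X := qp_ge2 R q_ge2 k_gt0.
have x_ge2 : 2 <= q%:R :> R by rewrite ler_nat.
have h_ge0 : 0 <= h%:R :> R := ler0n _ _.
have Wh_ge0 : 0 <= (X - 1) ^+ h by apply: exprn_ge0; lra.
have Wh_le : (X - 1) ^+ h <= X ^+ h by apply: lerXn2r; rewrite ?nnegrE; lra.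
have Wh1_ge0 : 0 <= (X - 1) ^+ h.-1 by apply: exprn_ge0; lra.
have Wh1_le : (X - 1) ^+ h.-1 <= X ^+ h.
  apply: le_trans (ler_weXn2l _ (leq_pred h)); last lra.
  by apply: lerXn2r; rewrite ?nnegrE; lra.
have Xr_ge1 : 1 <= X ^+ r by apply: exprn_ege1; lra.
set Y := X ^+ r in Xr_ge1 *; set Z := X ^+ h in Wh_le Wh1_le *.
have A_ge0 : 0 <= (X - 1) ^+ h * (Y - 1) by apply: mulr_ge0; lra.
have A_le : (X - 1) ^+ h * (Y - 1) <= Z * Y by apply: ler_pM; lra.
have B_ge0 : 0 <= (X - 1) ^+ h.-1 * (Y - 1) / (q%:R - 1).
  by apply: divr_ge0; [apply: mulr_ge0|]; lra.
have B_le : (X - 1) ^+ h.-1 * (Y - 1) / (q%:R - 1) <= Z * Y.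
  rewrite ler_pdivrMr; last lra.
  apply: le_trans (_ : Z * Y <= Z * Y * (q%:R - 1)); first by apply: ler_pM; lra.
  by apply: ler_peMr; [apply: mulr_ge0|]; lra.
apply/andP; split; first by apply: mulr_ge0; lra.
have -> : 2 * h%:R * (Z * Y) = h%:R * (Z * Y + Z * Y) by ring.
by apply: ler_wpM2l; lra.
Qed.

Lemma S5_le r k q : odd r -> (2 < r)%N -> (2 <= q)%N -> (0 < k)%N ->
  0 <= S5 R r k q <= ((r./2)%:R + 1) * qp R q ((r + uphalf r).-1 * k).
Proof.
move=> odd_r r_gt2 q_ge2 k_gt0; rewrite /S5 /qp uphalf_odd // addnS /=.
have h_gt0 : (0 < r./2)%N by have := odd_double_half r; rewrite -addnn; lia.
set h := r./2 in h_gt0 *.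
rewrite [((r + h) * k)%N]mulnC [(r * k)%N]mulnC addnC !exprM exprD.
set X := q%:R ^+ k; have X_ge2 : 2 <= X := qp_ge2 R q_ge2 k_gt0.
have h_ge0 : 0 <= h%:R :> R := ler0n _ _.
have XWh1_le : X * (X - 1) ^+ h.-1 <= X ^+ h.
  rewrite -{2}(prednK h_gt0) exprS; apply: ler_wpM2l; first lra.
  by apply: lerXn2r; rewrite ?nnegrE; lra.
have Wh1_ge0 : 0 <= (X - 1) ^+ h.-1 by apply: exprn_ge0; lra.
have Xh_ge1 : 1 <= X ^+ h by apply: exprn_ege1; lra.
have Xr_ge1 : 1 <= X ^+ r by apply: exprn_ege1; lra.
set Y := X ^+ r in Xr_ge1 *; set Z := X ^+ h in XWh1_le Xh_ge1 *.
have A_ge0 : 0 <= h%:R * X * (X - 1) ^+ h.-1 * (Y - 1).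
  by apply: mulr_ge0; [apply: mulr_ge0; [apply: mulr_ge0|]|]; lra.
have A_le : h%:R * X * (X - 1) ^+ h.-1 * (Y - 1) <= h%:R * (Z * Y).
  rewrite -!mulrA; apply: ler_wpM2l => //; rewrite mulrA.
  by apply: ler_pM; [apply: mulr_ge0| | |]; lra.
have B_ge0 : 0 <= (Y - 1) / (X - 1) by apply: divr_ge0; lra.
have B_le : (Y - 1) / (X - 1) <= Z * Y.
  rewrite ler_pdivrMr; last lra.
  have Y_le : Y <= Z * Y by apply: ler_peMl; lra.
  apply: le_trans (_ : Z * Y <= Z * Y * (X - 1)); first lra.
  by apply: ler_peMr; [apply: mulr_ge0|]; lra.
apply/andP; split; first lra.
have -> : (h%:R + 1) * (Z * Y) = h%:R * (Z * Y) + Z * Y by ring.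
lra.
Qed.

End SizeBounds.

Lemma cvg0_le_inv_nat (R : archiRealFieldType) (F : set_system nat) {FF : Filter F}
    (f : nat -> R) (K : R) :
  F --> \oo -> (\forall n \near F, 0 <= f n <= K / n%:R) -> f @ F --> 0.
Proof.
move=> F_oo f_le; apply/cvgrPdist_lt => e e_gt0.
apply: filterS3 f_le (F_oo _ (nbhs_infty_gtr (K / e))) (F_oo _ (nbhs_infty_ge 1)).
move=> n /andP[f_ge0 f_leK] n_gt n_ge1.
have n_gt0 : 0 < n%:R :> R by rewrite ltr0n.
rewrite sub0r normrN ger0_norm //; apply: le_lt_trans f_leK _.
by rewrite ltr_pdivrMr // mulrC -ltr_pdivrMr.
Qed.

Section Ratio.
Variables (R : realType) (r : nat).
Hypotheses (r_gt5 : (5 < r)%N) (r_npr : ~~ prime r).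

Lemma ratio_le k q (S C : R) : admissible r q -> (0 < k)%N ->
  0 <= S <= C * qp R q ((r + uphalf r).-1 * k) ->
  0 <= S / Nr R r k q <= C * Nr_const R r / qp R q k.
Proof.
move=> adm_q k_gt0 /andP[S_ge0 S_le].
have x_gt0 : 0 < q%:R :> R by rewrite ltr0n; have := admissible_ge2 adm_q; lia.
have c_gt0 := Nr_const_gt0 R r.
have deg_le : ((r + uphalf r).-1 * k + k <= Ndeg r * k)%N.
  have deg_ge := Ndeg_ge r_gt5 r_npr.
  rewrite -[X in (_ + X)%N]mul1n -mulnDl addn1 prednK; last lia.
  by rewrite leq_mul2r deg_ge orbT.
move: S_le (Nr_ge R adm_q k_gt0); rewrite /qp.
set a := ((r + uphalf r).-1 * k)%N; set x := q%:R => S_le N_ge.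
have xa_gt0 : 0 < x ^+ a := exprn_gt0 _ x_gt0.
have xk_gt0 : 0 < x ^+ k := exprn_gt0 _ x_gt0.
have C_ge0 : 0 <= C by rewrite -(pmulr_lge0 _ xa_gt0); exact: le_trans S_le.
have L_le : x ^+ a * x ^+ k / Nr_const R r <= Nr R r k q.
  apply: le_trans N_ge; rewrite -exprD ler_pM2r ?invr_gt0 //.
  by apply: ler_weXn2l deg_le; rewrite /x ler1n; have := admissible_ge2 adm_q; lia.
have N_gt0 : 0 < Nr R r k q.
  by apply: lt_le_trans L_le; apply: divr_gt0 => //; exact: mulr_gt0.
apply/andP; split; first by apply: divr_ge0 => //; exact: ltW.
rewrite ler_pdivrMr //; apply: le_trans S_le _.
apply: le_trans (ler_wpM2l _ L_le); last first.
  by apply: divr_ge0; [exact: mulr_ge0 (ltW c_gt0) | exact: ltW].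
suff -> : C * Nr_const R r / x ^+ k * (x ^+ a * x ^+ k / Nr_const R r) = C * x ^+ a by [].
by field; rewrite !gt_eqF.
Qed.

Lemma ratio_cvg0 (S : nat -> nat -> R) (C : R) : 0 <= C ->
  (forall k q, admissible r q -> (0 < k)%N ->
     0 <= S k q <= C * qp R q ((r + uphalf r).-1 * k)) ->
  (forall q, admissible r q -> (fun k => S k q / Nr R r k q) @ \oo --> 0) /\
  (forall k, (0 < k)%N ->
     (fun q => S k q / Nr R r k q) @ within (admissible r) \oo --> 0).
Proof.
move=> C_ge0 S_le; set K := C * Nr_const R r.
have K_ge0 : 0 <= K by apply: mulr_ge0 => //; exact/ltW/Nr_const_gt0.
have K_div_le (x y : R) : 0 < x -> x <= y -> K / y <= K / x.
  move=> x_gt0 x_le; rewrite ler_wpM2l // lef_pV2 ?posrE //.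
  exact: lt_le_trans x_le.
split=> [q adm_q | k k_gt0].
  have q_gt1 := admissible_ge2 adm_q.
  apply: (@cvg0_le_inv_nat _ _ _ _ K) => //; apply: filterS (nbhs_infty_ge 1) => k k_gt0.
  have /andP[-> /le_trans->] // := ratio_le adm_q k_gt0 (S_le k q adm_q k_gt0).
  by apply: K_div_le; rewrite ?ltr0n // /qp -natrX ler_nat ltnW // ltn_expl.
apply: (@cvg0_le_inv_nat _ _ _ _ K); first exact: cvg_within.
rewrite near_withinE; apply: nearW => q adm_q; have q_gt1 := admissible_ge2 adm_q.
have /andP[-> /le_trans->] // := ratio_le adm_q k_gt0 (S_le k q adm_q k_gt0).
by apply: K_div_le; rewrite ?ltr0n ?ler_eXnr ?ler1n //; lia.
Qed.

End Ratio.

Theorem theorem4p1 (R : realType) (r : nat) :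
  (6 <= r)%N -> ~~ prime r ->
  (* S3 / N_r -> 0 *)
  (forall q : nat, admissible r q ->
     (fun k : nat => S3 R r k q / Nr R r k q) @ \oo --> (0 : R)) /\
  (forall k : nat, (1 <= k)%N ->
     (fun q : nat => S3 R r k q / Nr R r k q) @ within (admissible r) \oo
       --> (0 : R)) /\
  (* r odd: S4 / N_r -> 0 and S5 / N_r -> 0 *)
  (odd r ->
    (forall q : nat, admissible r q ->
       (fun k : nat => S4 R r k q / Nr R r k q) @ \oo --> (0 : R)) /\
    (forall k : nat, (1 <= k)%N ->
       (fun q : nat => S4 R r k q / Nr R r k q) @ within (admissible r) \oo
         --> (0 : R)) /\
    (forall q : nat, admissible r q ->
       (fun k : nat => S5 R r k q / Nr R r k q) @ \oo --> (0 : R)) /\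
    (forall k : nat, (1 <= k)%N ->
       (fun q : nat => S5 R r k q / Nr R r k q) @ within (admissible r) \oo
         --> (0 : R))).
Proof.
move=> r_gt5 r_npr; have r_gt2 : (2 < r)%N by lia.
have S3_bd k q : admissible r q -> (0 < k)%N ->
    0 <= S3 R r k q <= 2 * qp R q ((r + uphalf r).-1 * k).
  by move=> /admissible_ge2; exact: S3_le.
have [S3_k S3_q] := ratio_cvg0 r_gt5 r_npr (ler0n R 2) S3_bd.
split=> //; split=> // odd_r.
have S4_bd k q : admissible r q -> (0 < k)%N ->
    0 <= S4 R r k q <= 2 * (r./2)%:R * qp R q ((r + uphalf r).-1 * k).
  by move=> /admissible_ge2; exact: S4_le.
have S5_bd k q : admissible r q -> (0 < k)%N ->
    0 <= S5 R r k q <= ((r./2)%:R + 1) * qp R q ((r + uphalf r).-1 * k).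
  by move=> /admissible_ge2; exact: S5_le.
have [S4_k S4_q] := ratio_cvg0 r_gt5 r_npr (mulr_ge0 (ler0n R 2) (ler0n R _)) S4_bd.
have [S5_k S5_q] := ratio_cvg0 r_gt5 r_npr (addr_ge0 (ler0n R _) ler01) S5_bd.
by do !split.
Qed.
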